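(* Let $E$ be a real or complex Banach space, $T$ a strongly continuous semigroup on $E$, $\mathcal U$ a countably incomplete ultrafilter on a set $I$, and ${}^*$ the corresponding bounded ultrapower. Let $\Phi:\ell^\infty_I(E)/c_{\mathcal U}\to\widehat E$, $\Phi(\langle f_i\rangle+c_{\mathcal U})=\widehat f$ ($f$ the $\mathcal U$-class of $\langle f_i\rangle$). Then $\widehat E_{\max}=\Phi\big(\{x\in\ell^\infty_I(E)/c_{\mathcal U}:\lim_{t\to0}\|\tilde T(t)x-x\|=0\}\big)$, i.e. $\widehat E_{\max}$ corresponds to the maximal continuous subspace of $\ell^\infty_I(E)/c_{\mathcal U}$ with respect to $\tilde T$.
   Context: A semigroup is a map $T:[0,\infty)\to\mathcal L(E)$ with $T(0)=\mathrm{Id}$, $T(s+t)=T(s)T(t)$; strongly continuous means $\lim_{t\to0}\|T(t)f-f\|=0$ for all $f$. $\ell^\infty_I(E)$: bounded families in $E$ with sup-norm; $c_{\mathcal U}$: families with: for every $\varepsilon>0$ some $J\in\mathcal U$ has $\|f_i\|<\varepsilon$ for $i\in J$; quotient norm on $\ell^\infty_I(E)/c_{\mathcal U}$; $\tilde T(t)\langle f_i\rangle=\langle T(t)f_i\rangle$, induced also on the quotient. In the bounded ultrapower, ${}^*E$ consists of $\mathcal U$-classes of $I$-sequences in $E$. A nonstandard element is finite if its norm is bounded by a standard natural number, infinitesimal if its norm is below every standard $1/n$. $\widehat E=\mathrm{fin}({}^*E)/E_0$ (finite elements modulo infinitesimal ones), class map $f\mapsto\widehat f$, norm $\mathrm{st}(\|f\|)$.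 $E_{\max}$ is the set of finite $f\in{}^*E$ such that for every standard $\varepsilon>0$ there is standard $\delta>0$ with $\|{}^*T(t)f-f\|<\varepsilon$ for all positive standard $t<\delta$; $\widehat E_{\max}=E_{\max}/E_0$. *)

From HB Require Import structures.
From mathcomp Require Import all_boot all_order all_algebra.
From mathcomp Require Import all_classical all_reals all_analysis.
Set Implicit Arguments. Unset Strict Implicit. Unset Printing Implicit Defensive.
Import Order.TTheory GRing.Theory Num.Theory.
Import numFieldNormedType.Exports.
Local Open Scope classical_set_scope.
Local Open Scope ring_scope.

Section Defs.
Variables (R : realType) (E : normedModType R) (I : Type).

(* strongly continuous semigroup T : [0,oo) -> L(E); values at t < 0 are irrelevant *)
Definition strongly_continuous_semigroup (T : R -> {linear E -> E}) : Prop :=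
  [/\ (forall t, 0 <= t -> continuous (T t)),
      (forall x, T 0 x = x),
      (forall s t x, 0 <= s -> 0 <= t -> T (s + t) x = T s (T t x)) &
      (forall f, T t f @[t --> 0^'+] --> f)].

Definition is_ultrafilter (U : set (set I)) : Prop :=
  [/\ U setT, ~ U set0,
      (forall A B, U A -> A `<=` B -> U B),
      (forall A B, U A -> U B -> U (A `&` B)) &
      (forall A, U A \/ U (~` A))].

Definition countably_incomplete (U : set (set I)) : Prop :=
  exists J : nat -> set I, (forall n, U (J n)) /\ ~ U (\bigcap_n J n).

Variable U : set (set I).

Definition bounded_family (f : I -> E) : Prop :=
  exists M : R, forall i, `|f i| <= M.

Definition cU (f : I -> E) : Prop :=
  bounded_family f /\
  forall eps : R, 0 < eps -> exists J, U J /\ forall i, J i -> `|f i| < eps.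

Definition supnorm (f : I -> E) : R := sup (range (fun i => `|f i|)).

Definition qnorm (f : I -> E) : R :=
  inf [set supnorm (f - c) | c in cU].

(* the class f + c_U lies in the maximal continuous subspace w.r.t. tilde T:
   lim_{t -> 0} || tilde T(t) x - x || = 0 *)
Definition tilde_continuous (T : R -> {linear E -> E}) (f : I -> E) : Prop :=
  qnorm (fun i => T t (f i) - f i) @[t --> 0^'+] --> 0.

(* nonstandard side: an element of *E is the U-class of an I-sequence f;
   its norm is the class of (|f i|)_i in *R, compared with standard reals by Los *)
Definition ns_finite (f : I -> E) : Prop :=
  exists n : nat, U [set i | `|f i| <= n%:R].

Definition ns_infinitesimal (f : I -> E) : Prop :=
  forall n : nat, U [set i | `|f i| < (n.+1%:R)^-1].

Definition E_max (T : R -> {linear E -> E}) (f : I -> E) : Prop :=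
  ns_finite f /\
  forall eps : R, 0 < eps -> exists2 delta : R, 0 < delta &
    forall t : R, 0 < t -> t < delta -> U [set i | `|T t (f i) - f i| < eps].

(* hat E_max = E_max / E_0, as the set of (representatives of) finite elements
   whose class in hat E = fin of *E modulo E_0 lies in E_max / E_0 *)
Definition Ehat_max (T : R -> {linear E -> E}) : set (I -> E) :=
  [set f | ns_finite f /\ exists2 g, E_max T g & ns_infinitesimal (g - f)].

(* Phi({x in ell^oo/c_U : lim ||tilde T(t)x - x|| = 0}) as a subset of hat E,
   given by (representatives of) finite elements of *E :
   Phi(<g_i> + c_U) = hat(U-class of g) *)
Definition Phi_image (T : R -> {linear E -> E}) : set (I -> E) :=
  [set f | ns_finite f /\
    exists2 g, (bounded_family g /\ tilde_continuous T g) & ns_infinitesimal (g - f)].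

End Defs.

From HB Require Import structures.
From mathcomp Require Import all_boot all_order all_algebra.
From mathcomp Require Import all_classical all_reals all_analysis.
Import Order.TTheory GRing.Theory Num.Theory.
Import numFieldNormedType.Exports.
Local Open Scope classical_set_scope.
Local Open Scope ring_scope.

(* For a bounded family h, the quotient norm of h + c_U is the U-limit superior
   of the norms |h i|: qnorm h <= e as soon as |h i| <= e on a U-large set, and
   |h i| < e on a U-large set as soon as qnorm h < e.  Applied to
   h = T(t) g - g, this turns the nonstandard condition defining E_max into
   lim_{t -> 0} ||tilde T(t) (g + c_U) - (g + c_U)|| = 0 for bounded g.  Every
   finite element agrees U-almost everywhere with a bounded family, and
   neither membership in E_max nor the class in hat E sees such a change. *)

Set Implicit Arguments. Unset Strict Implicit.

Lemma near_rightP (R : realType) (x : R) (P : R -> Prop) :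
  (\forall t \near x^'+, P t) <->
  exists2 d : R, 0 < d & forall t, x < t -> t < x + d -> P t.
Proof.
split.
- move=> /nbhs_ballP [d d0 Pd]; exists d => // t xt txd.
  apply: Pd => //; rewrite /ball /= ltr_distlC txd andbT.
  by rewrite ltrBlDr (lt_trans xt) ?ltrDl.
- move=> [d d0 Pd]; near=> t; apply: Pd; near: t.
    exact: nbhs_right_gt.
  by apply: nbhs_right_lt; rewrite ltrDl.
Unshelve. all: by end_near.
Qed.

Section Ultrapower.
Variables (R : realType) (E : normedModType R) (I : Type) (U : set (set I)).
Hypothesis U_ultra : is_ultrafilter U.

#[local] Instance ultrafilter_proper : ProperFilter U.
Proof.
case: U_ultra => UT U0 US UI _; apply: Build_ProperFilter => //.
by split => // A B AB UA; exact: US UA AB.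
Qed.

Lemma bounded_familyB (f g : I -> E) :
  bounded_family f -> bounded_family g -> bounded_family (f - g).
Proof.
move=> [M fM] [N gN]; exists (M + N) => i.
by rewrite (le_trans (ler_normB _ _)) // lerD.
Qed.

Lemma bounded_family_comp (A : {linear E -> E}) (g : I -> E) :
  continuous A -> bounded_family g -> bounded_family (A \o g).
Proof.
move=> /(linear_bounded_continuous A).2 /bounded_funP Ab [M gM].
have [N AN] := Ab M; exists N => i; exact/AN/gM.
Qed.

Lemma norm_le_supnorm (h : I -> E) i :
  bounded_family h -> `|h i| <= supnorm h.
Proof.
move=> [M hM]; apply: ub_le_sup; last by exists i.
by exists M => _ [j _ <-].
Qed.

Lemma supnorm_le (h : I -> E) M : (forall i, `|h i| <= M) -> supnorm h <= M.
Proof.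
move=> hM; have [i _] := filter_ex (F := U) filterT.
by apply: ge_sup => [|_ [j _ <-] //]; exists `|h i|, i.
Qed.

Lemma cU_truncation (h : I -> E) (A : set I) :
  bounded_family h -> U A -> cU U (fun i => if `[< A i >] then 0 else h i).
Proof.
move=> [M hM] UA; split.
  exists M => i; case: asboolP => _ //.
  by rewrite normr0 (le_trans _ (hM i)).
move=> e e0; exists A; split => // i Ai.
by rewrite asboolT // normr0.
Qed.

Lemma supnorm_ge0 (h : I -> E) : bounded_family h -> 0 <= supnorm h.
Proof.
have [i _] := filter_ex (F := U) filterT.
by move=> /(norm_le_supnorm i); apply: le_trans.
Qed.

Lemma qnorm_lbound (h : I -> E) :
  bounded_family h -> lbound [set supnorm (h - c) | c in cU U] 0.
Proof. by move=> hb _ [c [cb _] <-]; exact/supnorm_ge0/bounded_familyB. Qed.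

Lemma qnorm_set_neq0 (h : I -> E) :
  bounded_family h -> [set supnorm (h - c) | c in cU U] !=set0.
Proof.
move=> hb; eexists; exists (fun i => if `[< setT i >] then 0 else h i) => //.
exact: (cU_truncation hb filterT).
Qed.

Lemma qnorm_ge0 (h : I -> E) : bounded_family h -> 0 <= qnorm U h.
Proof.
by move=> hb; apply: lb_le_inf; [exact: qnorm_set_neq0 | exact: qnorm_lbound].
Qed.

Lemma qnorm_le_of_ultra (h : I -> E) (e : R) :
  bounded_family h -> U [set i | `|h i| <= e] -> qnorm U h <= e.
Proof.
move=> hb Ue; set c := fun i => if `[< `|h i| <= e >] then 0 else h i.
apply: (@le_trans _ _ (supnorm (h - c))).
  apply: ge_inf; first by exists 0; exact: qnorm_lbound.
  by exists c => //; exact: (cU_truncation hb Ue).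
apply: supnorm_le => i; rewrite /c !fctE; case: asboolP => [hie|_].
  by rewrite subr0.
have [j /= hje] := filter_ex Ue.
by rewrite subrr normr0 (le_trans _ hje).
Qed.

Lemma ultra_lt_of_qnorm_lt (h : I -> E) (e : R) :
  bounded_family h -> qnorm U h < e -> U [set i | `|h i| < e].
Proof.
move=> hb /(inf_lt (qnorm_set_neq0 hb)) [_ [c [cb csmall] <-] hce].
have gap : 0 < e - supnorm (h - c) by rewrite subr_gt0.
have [J [UJ cJ]] := csmall _ gap.
apply: filterS UJ => i /cJ ci /=.
rewrite -(subrK (c i) (h i)) (le_lt_trans (ler_normD _ _)) //.
have hci := norm_le_supnorm i (bounded_familyB hb cb).
by have := ler_ltD hci ci; rewrite subrKC.
Qed.

Lemma ns_finiteP (g : I -> E) :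
  ns_finite U g <-> exists2 g', bounded_family g' & U [set i | g' i = g i].
Proof.
split.
- move=> [n Un]; exists (fun i => if `[< `|g i| <= n%:R >] then g i else 0).
    by exists n%:R => i; case: asboolP => // _; rewrite normr0.
  by apply: filterS Un => i /= gin; rewrite asboolT.
- move=> [g' [M g'M] Ug']; exists (Num.Def.archi_bound `|M|).
  apply: filterS Ug' => i /= <-; rewrite (le_trans (g'M i)) //.
  exact/(le_trans (ler_norm M))/ltW/archi_boundP.
Qed.

Lemma ns_infinitesimal_eq (f g g' : I -> E) : U [set i | g' i = g i] ->
  ns_infinitesimal U (g - f) -> ns_infinitesimal U (g' - f).
Proof.
move=> Ug' gf n; apply: filterS (filterI Ug' (gf n)) => i [/= eqg].
by rewrite !fctE eqg.
Qed.

Variable T : R -> {linear E -> E}.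

Lemma E_max_eq (g g' : I -> E) :
  U [set i | g' i = g i] -> E_max U T g -> E_max U T g'.
Proof.
move=> Ug' [[n Un] gT]; split.
  by exists n; apply: filterS (filterI Ug' Un) => i [/= ->].
move=> e e0; have [d d0 dT] := gT e e0; exists d => // t t0 td.
by apply: filterS (filterI Ug' (dT t t0 td)) => i [/= ->].
Qed.

Hypothesis T_cont : forall t, 0 < t -> continuous (T t).

Lemma bounded_family_increment (g : I -> E) t : 0 < t ->
  bounded_family g -> bounded_family (fun i => T t (g i) - g i).
Proof.
by move=> t0 gb; exact: bounded_familyB (bounded_family_comp (T_cont t0) gb) gb.
Qed.

Lemma bounded_E_maxP (g : I -> E) :
  bounded_family g -> E_max U T g <-> tilde_continuous U T g.
Proof.
move=> gb; split.
- move=> [_ gT]; apply/cvgr0Pnorm_le => e e0; have [d d0 dT] := gT e e0.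
  apply/near_rightP; exists d => // t t0; rewrite add0r => td.
  have Tgb := bounded_family_increment t0 gb.
  rewrite ger0_norm ?qnorm_ge0 //; apply: qnorm_le_of_ultra => //.
  by apply: filterS (dT t t0 td) => i /ltW.
- move=> gT; split.
    by apply/ns_finiteP; exists g => //; apply: filterS filterT.
  move=> e e0; have /cvgr0Pnorm_lt/(_ e e0)/near_rightP [d d0 dT] := gT.
  exists d => // t t0 td; have Tgb := bounded_family_increment t0 gb.
  apply: ultra_lt_of_qnorm_lt => //.
  by have := dT t t0; rewrite add0r ger0_norm ?qnorm_ge0 //; apply.
Qed.

End Ultrapower.

Theorem mainTheorem9 (R : realType) (E : completeNormedModType R)
  (T : R -> {linear E -> E}) (I : Type) (U : set (set I)) :
  strongly_continuous_semigroup T ->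
  is_ultrafilter U -> countably_incomplete U ->
  Ehat_max U T = Phi_image U T.
Proof.
move=> [T_cont _ _ _] U_ultra _.
have T_pos t : 0 < t -> continuous (T t) by move=> /ltW; exact: T_cont.
apply/seteqP; split => f [ff [g gP gf]]; split => //.
- have [g' g'b g'g] := (ns_finiteP U_ultra g).1 gP.1.
  exists g'; last exact: ns_infinitesimal_eq gf.
  split => //; apply/(bounded_E_maxP U_ultra T_pos g'b).
  exact: E_max_eq gP.
- case: gP => gb gT; exists g => //.
  exact/(bounded_E_maxP U_ultra T_pos gb).
Qed.
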